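(* Let $P:\mathcal{C}^{\mathrm{op}}\to\mathbf{Pos}$ be a universal slat-doctrine and suppose $\mathcal{C}$ has exponents. Then the existential completion $P^{ex}$ is both existential and universal.
   Context: A slat-doctrine is a functor $P:\mathcal{C}^{\mathrm{op}}\to\mathbf{Pos}$ where $\mathcal{C}$ has finite products; for $f:X\to Y$, $P_f:P(Y)\to P(X)$ is reindexing. $P$ is existential (resp. universal) if for all objects $A_1,A_2$ and $i=1,2$ the map $P_{\mathrm{pr}_i}:P(A_i)\to P(A_1\times A_2)$ has a left adjoint $\exists_{\mathrm{pr}_i}$ (resp. a right adjoint $\forall_{\mathrm{pr}_i}$) and these satisfy the Beck–Chevalley condition: for every pullback square with projections $\mathrm{pr}':X'\to A'$, $\mathrm{pr}:X\to A$ and arrows $f:A'\to A$, $f':X'\to X$ with $\mathrm{pr}\, f'=f\,\mathrm{pr}'$, one has $\exists_{\mathrm{pr}'}P_{f'}=P_f\exists_{\mathrm{pr}}$ (resp. $\forall_{\mathrm{pr}'}P_{f'}=P_f\forall_{\mathrm{pr}}$). Existential completion: $P^{ex}(A)$ is the poset (reflection of the preorder) of triples $(A,B,\alpha)$ with $\alpha\in P(A\times B)$, where $(A,B,\alpha)\le(A,C,\beta)$ iff there is $f:A\times B\to C$ with $\alpha\le P_{\langle\mathrm{pr}_A,f\rangle}(\beta)$; for $f:A\to C$, $P^{ex}_f(C,D,\gamma)=(A,D,P_{f\times 1_D}(\gamma))$. *)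

Set Implicit Arguments.
Unset Strict Implicit.

Record CatFP := {
  ob : Type;
  hom : ob -> ob -> Type;
  idm : forall A, hom A A;
  comp : forall A B C, hom B C -> hom A B -> hom A C;
  comp_idl : forall A B (f : hom A B), comp (idm B) f = f;
  comp_idr : forall A B (f : hom A B), comp f (idm A) = f;
  comp_assoc : forall A B C D (h : hom C D) (g : hom B C) (f : hom A B),
      comp h (comp g f) = comp (comp h g) f;
  term : ob;
  bang : forall A, hom A term;
  bang_uniq : forall A (f : hom A term), f = bang A;
  prod : ob -> ob -> ob;
  pr1 : forall A B, hom (prod A B) A;
  pr2 : forall A B, hom (prod A B) B;
  pair : forall X A B, hom X A -> hom X B -> hom X (prod A B);
  pair_pr1 : forall X A B (f : hom X A) (g : hom X B), comp (pr1 A B) (pair f g) = f;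
  pair_pr2 : forall X A B (f : hom X A) (g : hom X B), comp (pr2 A B) (pair f g) = g;
  pair_uniq : forall X A B (h : hom X (prod A B)),
      h = pair (comp (pr1 A B) h) (comp (pr2 A B) h)
}.

Arguments hom : clear implicits.
Arguments idm {c} A.
Arguments comp {c A B C} _ _.
Arguments bang {c} A.
Arguments prod {c} _ _.
Arguments pr1 {c} A B.
Arguments pr2 {c} A B.
Arguments pair {c X A B} _ _.
Arguments term {c}.

Definition fprod (C : CatFP) (A A' B B' : ob C) (f : hom C A A') (g : hom C B B')
  : hom C (prod A B) (prod A' B') :=
  pair (comp f (pr1 A B)) (comp g (pr2 A B)).

Definition has_exponents (C : CatFP) : Prop :=
  forall A B : ob C, exists (E : ob C) (ev : hom C (prod E A) B),
    forall (X : ob C) (g : hom C (prod X A) B),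
      exists h : hom C X E,
        comp ev (fprod h (idm A)) = g /\
        (forall h' : hom C X E, comp ev (fprod h' (idm A)) = g -> h' = h).

Record Doctrine (C : CatFP) := {
  fib : ob C -> Type;
  ple : forall A, fib A -> fib A -> Prop;
  reidx : forall A B, hom C A B -> fib B -> fib A
}.

Arguments fib {C} d A.
Arguments ple {C d A} _ _.
Arguments reidx {C d A B} f _.

Definition is_doctrine (C : CatFP) (P : Doctrine C) : Prop :=
  (forall A (a : fib P A), ple a a) /\
  (forall A (a b c : fib P A), ple a b -> ple b c -> ple a c) /\
  (forall A B (f : hom C A B) (a b : fib P B), ple a b -> ple (reidx f a) (reidx f b)) /\
  (forall A (a : fib P A), reidx (idm A) a = a) /\
  (forall A B D (f : hom C A B) (g : hom C B D) (a : fib P D),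
      reidx (comp g f) a = reidx f (reidx g a)).

(** [P] is a slat-doctrine: a functor C^op -> Pos (fibres are posets). *)
Definition is_pos_doctrine (C : CatFP) (P : Doctrine C) : Prop :=
  is_doctrine P /\
  (forall A (a b : fib P A), ple a b -> ple b a -> a = b).

(** Equality in the poset reflection of a fibre = mutual inequality. *)
Definition peq (C : CatFP) (P : Doctrine C) A (a b : fib P A) : Prop :=
  ple a b /\ ple b a.

Definition existential (C : CatFP) (P : Doctrine C) : Prop :=
  exists (ex1 : forall A B, fib P (prod A B) -> fib P A)
         (ex2 : forall A B, fib P (prod A B) -> fib P B),
    (forall A B (a : fib P (prod A B)) (b : fib P A),
        ple (ex1 A B a) b <-> ple a (reidx (pr1 A B) b)) /\
    (forall A B (a : fib P (prod A B)) (b : fib P B),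
        ple (ex2 A B a) b <-> ple a (reidx (pr2 A B) b)) /\
    (forall A A' B (f : hom C A' A) (a : fib P (prod A B)),
        peq (ex1 A' B (reidx (fprod f (idm B)) a)) (reidx f (ex1 A B a))) /\
    (forall A B B' (f : hom C B' B) (a : fib P (prod A B)),
        peq (ex2 A B' (reidx (fprod (idm A) f) a)) (reidx f (ex2 A B a))).

Definition universal (C : CatFP) (P : Doctrine C) : Prop :=
  exists (all1 : forall A B, fib P (prod A B) -> fib P A)
         (all2 : forall A B, fib P (prod A B) -> fib P B),
    (forall A B (a : fib P (prod A B)) (b : fib P A),
        ple b (all1 A B a) <-> ple (reidx (pr1 A B) b) a) /\
    (forall A B (a : fib P (prod A B)) (b : fib P B),
        ple b (all2 A B a) <-> ple (reidx (pr2 A B) b) a) /\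
    (forall A A' B (f : hom C A' A) (a : fib P (prod A B)),
        peq (all1 A' B (reidx (fprod f (idm B)) a)) (reidx f (all1 A B a))) /\
    (forall A B B' (f : hom C B' B) (a : fib P (prod A B)),
        peq (all2 A B' (reidx (fprod (idm A) f) a)) (reidx f (all2 A B a))).

(** * Existential completion P^ex (on representatives (A,B,alpha);
    the poset P^ex(A) is the reflection of this preorder). *)
Definition PexT (C : CatFP) (P : Doctrine C) (A : ob C) : Type :=
  { B : ob C & fib P (prod A B) }.

Definition Pex_le (C : CatFP) (P : Doctrine C) (A : ob C) (x y : PexT P A) : Prop :=
  exists f : hom C (prod A (projT1 x)) (projT1 y),
    ple (projT2 x) (reidx (pair (pr1 A (projT1 x)) f) (projT2 y)).

Definition Pex_reidx (C : CatFP) (P : Doctrine C) (A D : ob C) (f : hom C A D)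
  (x : PexT P D) : PexT P A :=
  existT _ (projT1 x) (reidx (fprod f (idm (projT1 x))) (projT2 x)).

Definition Pex (C : CatFP) (P : Doctrine C) : Doctrine C :=
  {| fib := PexT P; ple := @Pex_le C P; reidx := @Pex_reidx C P |}.

(** An element of [P^ex(A)] is a formal existential [exists b : B, alpha(a, b)],
    and both quantifiers of [P^ex] are computed on representatives.
    Existential quantification along a projection merges the quantified
    variable into the witness: [exists b, exists d, alpha(a, b, d)] is
    represented over the object [B x D].  Universal quantification is
    Skolemisation: [forall b, exists d, alpha(a, b, d)] is equivalent to
    [exists h : D^B, forall b, alpha(a, b, h b)], whose inner [forall] is that of
    [P]. *)

From Stdlib Require Import IndefiniteDescription.

Section Products.
Context {C : CatFP}.

Lemma comp_pair (X Y A B : ob C) (f : hom C Y A) (g : hom C Y B) (h : hom C X Y) :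
  comp (pair f g) h = pair (comp f h) (comp g h).
Proof.
  rewrite (pair_uniq (comp (pair f g) h)), !comp_assoc, pair_pr1, pair_pr2.
  reflexivity.
Qed.

Lemma hom_prod_ext (X A B : ob C) (h k : hom C X (prod A B)) :
  comp (pr1 A B) h = comp (pr1 A B) k -> comp (pr2 A B) h = comp (pr2 A B) k -> h = k.
Proof. intros E1 E2. rewrite (pair_uniq h), (pair_uniq k), E1, E2. reflexivity. Qed.

End Products.

Ltac catnorm :=
  repeat progress (first [ rewrite comp_pair | rewrite pair_pr1 | rewrite pair_pr2
                         | rewrite comp_idl | rewrite comp_idr | rewrite <- comp_assoc ]).

Ltac cateq := unfold fprod in *; catnorm;
  first [ reflexivity | apply hom_prod_ext; cateq ].

Section StructuralMaps.
Context {C : CatFP}.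

Definition swap (A B : ob C) : hom C (prod A B) (prod B A) := pair (pr2 A B) (pr1 A B).

Definition assocl (A B D : ob C) : hom C (prod A (prod B D)) (prod (prod A B) D) :=
  pair (pair (pr1 A _) (comp (pr1 B D) (pr2 A _))) (comp (pr2 B D) (pr2 A _)).

Definition assocr (A B D : ob C) : hom C (prod (prod A B) D) (prod A (prod B D)) :=
  pair (comp (pr1 A B) (pr1 _ D)) (pair (comp (pr2 A B) (pr1 _ D)) (pr2 _ D)).

Definition swap_mid (A B F : ob C) : hom C (prod (prod A B) F) (prod (prod A F) B) :=
  pair (pair (comp (pr1 A B) (pr1 _ F)) (pr2 _ F)) (comp (pr2 A B) (pr1 _ F)).

Lemma pair_pr1_pr2 (A B : ob C) : pair (pr1 A B) (pr2 A B) = idm (prod A B).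
Proof. cateq. Qed.

Lemma fprod_idm (A B : ob C) : fprod (idm A) (idm B) = idm (prod A B).
Proof. cateq. Qed.

Lemma swap_swap (A B : ob C) : comp (swap B A) (swap A B) = idm (prod A B).
Proof. unfold swap; cateq. Qed.

Lemma pr1_swap (A B : ob C) : comp (pr1 B A) (swap A B) = pr2 A B.
Proof. unfold swap; cateq. Qed.

Lemma swap_fprod (A B B' : ob C) (f : hom C B' B) :
  comp (fprod (idm A) f) (swap B' A) = comp (swap B A) (fprod f (idm A)).
Proof. unfold swap; cateq. Qed.

Lemma assocr_assocl (A B D : ob C) : comp (assocr A B D) (assocl A B D) = idm _.
Proof. unfold assocl, assocr; cateq. Qed.

Lemma assocl_assocr (A B D : ob C) : comp (assocl A B D) (assocr A B D) = idm _.
Proof. unfold assocl, assocr; cateq. Qed.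

Lemma assocl_fprod (A A' B D : ob C) (f : hom C A' A) :
  comp (fprod (fprod f (idm B)) (idm D)) (assocl A' B D)
  = comp (assocl A B D) (fprod f (idm (prod B D))).
Proof. unfold assocl; cateq. Qed.

Lemma swap_mid_swap_mid (A B F : ob C) :
  comp (swap_mid A F B) (swap_mid A B F) = idm _.
Proof. unfold swap_mid; cateq. Qed.

Lemma pr1_swap_mid (A B F : ob C) :
  comp (pr1 (prod A F) B) (swap_mid A B F) = fprod (pr1 A B) (idm F).
Proof. unfold swap_mid; cateq. Qed.

End StructuralMaps.

Section DoctrineFacts.
Context {C : CatFP} {Q : Doctrine C}.
Hypothesis HQ : is_doctrine Q.

Lemma ple_refl {A} (a : fib Q A) : ple a a.
Proof. apply HQ. Qed.

Lemma ple_trans {A} {a b c : fib Q A} : ple a b -> ple b c -> ple a c.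
Proof. apply HQ. Qed.

Lemma reidx_mono {A B} (f : hom C A B) {a b : fib Q B} :
  ple a b -> ple (reidx f a) (reidx f b).
Proof. apply HQ. Qed.

Lemma reidx_id {A} (a : fib Q A) : reidx (idm A) a = a.
Proof. apply HQ. Qed.

Lemma reidx_comp {A B D} {f : hom C A B} {g : hom C B D} {a : fib Q D} :
  reidx (comp g f) a = reidx f (reidx g a).
Proof. apply HQ. Qed.

Lemma ple_of_eq {A} {a b : fib Q A} : a = b -> ple a b.
Proof. intros ->. apply ple_refl. Qed.

Lemma reidx_le_reidx_iff {X Y} {f : hom C X Y} {g : hom C Y X} {a b : fib Q Y} :
  comp f g = idm Y -> (ple (reidx f a) (reidx f b) <-> ple a b).
Proof.
  intros fg. split; [|apply reidx_mono].
  intros H. apply (reidx_mono g) in H.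
  rewrite <- !reidx_comp, fg, !reidx_id in H. exact H.
Qed.

Lemma existential_of_pr1 (ex1 : forall A B, fib Q (prod A B) -> fib Q A) :
  (forall A B (a : fib Q (prod A B)) (b : fib Q A),
      ple (ex1 A B a) b <-> ple a (reidx (pr1 A B) b)) ->
  (forall A A' B (f : hom C A' A) (a : fib Q (prod A B)),
      peq (ex1 A' B (reidx (fprod f (idm B)) a)) (reidx f (ex1 A B a))) ->
  existential Q.
Proof.
  intros ex1_adj ex1_bc.
  exists ex1, (fun A B a => ex1 B A (reidx (swap B A) a)).
  split; [exact ex1_adj|]. split; [|split; [exact ex1_bc|]].
  - intros A B a b.
    rewrite ex1_adj, <- (reidx_le_reidx_iff (swap_swap B A)).
    rewrite <- !reidx_comp, swap_swap, pr1_swap, reidx_id.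
    reflexivity.
  - intros A B B' f a. cbv beta.
    rewrite <- reidx_comp, swap_fprod, reidx_comp.
    apply ex1_bc.
Qed.

End DoctrineFacts.

(** Universal quantifiers of [Q] are existential quantifiers of its fibrewise
    opposite. *)
Definition op_doctrine {C : CatFP} (Q : Doctrine C) : Doctrine C :=
  {| fib := fib Q; ple := fun A a b => ple b a; reidx := fun A B f => reidx f |}.

Lemma op_is_doctrine {C : CatFP} {Q : Doctrine C} :
  is_doctrine Q -> is_doctrine (op_doctrine Q).
Proof.
  intros (Hr & Ht & Hm & Hi & Hc).
  repeat split; cbn; eauto.
Qed.

Lemma universal_of_pr1 {C : CatFP} {Q : Doctrine C} (HQ : is_doctrine Q)
    {all1 : forall A B, fib Q (prod A B) -> fib Q A} :
  (forall A B (a : fib Q (prod A B)) (b : fib Q A),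
      ple b (all1 A B a) <-> ple (reidx (pr1 A B) b) a) ->
  (forall A A' B (f : hom C A' A) (a : fib Q (prod A B)),
      peq (all1 A' B (reidx (fprod f (idm B)) a)) (reidx f (all1 A B a))) ->
  universal Q.
Proof.
  intros all1_adj all1_bc.
  destruct (existential_of_pr1 (op_is_doctrine HQ) (Q := op_doctrine Q) all1 all1_adj)
    as (all1' & all2 & adj1 & adj2 & bc1 & bc2).
  - intros A A' B f a. destruct (all1_bc A A' B f a). split; assumption.
  - exists all1', all2. split; [exact adj1|]. split; [exact adj2|]. split.
    + intros A A' B f a. destruct (bc1 A A' B f a). split; assumption.
    + intros A B B' f a. destruct (bc2 A B B' f a). split; assumption.
Qed.

Lemma weak_exponents_choice {C : CatFP} :
  has_exponents C ->
  { E : ob C -> ob C -> ob C &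
  { ev : forall B D, hom C (prod (E B D) B) D |
    forall B D X (g : hom C (prod X B) D), exists h, comp (ev B D) (fprod h (idm B)) = g } }.
Proof.
  intros Hexp.
  assert (Hs : forall B D, { E : ob C & { ev : hom C (prod E B) D |
            forall X (g : hom C (prod X B) D), exists h, comp ev (fprod h (idm B)) = g } }).
  { intros B D. destruct (constructive_indefinite_description _ (Hexp B D)) as [E HE].
    exists E. apply constructive_indefinite_description.
    destruct HE as [ev Hev]. exists ev.
    intros X g. destruct (Hev X g) as [h [Hh _]]. exists h. exact Hh. }
  exists (fun B D => projT1 (Hs B D)), (fun B D => proj1_sig (projT2 (Hs B D))).
  intros B D. exact (proj2_sig (projT2 (Hs B D))).
Qed.

Section ExistentialCompletion.
Context {C : CatFP} {P : Doctrine C}.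
Hypothesis HP : is_doctrine P.

Lemma Pex_le_of_ple A B (a b : fib P (prod A B)) :
  ple a b -> Pex_le (existT _ B a : PexT P A) (existT _ B b).
Proof.
  intros H. exists (pr2 A B). cbn.
  rewrite pair_pr1_pr2, reidx_id by exact HP. exact H.
Qed.

Lemma Pex_le_refl A (x : PexT P A) : Pex_le x x.
Proof. destruct x. apply Pex_le_of_ple, ple_refl, HP. Qed.

Lemma Pex_le_trans A (x y z : PexT P A) : Pex_le x y -> Pex_le y z -> Pex_le x z.
Proof.
  destruct x as [B a], y as [D b], z as [F c]. cbn.
  intros [f Hf] [g Hg].
  exists (comp g (pair (pr1 A B) f)).
  apply (ple_trans HP Hf). apply (reidx_mono HP (pair (pr1 A B) f)) in Hg.
  apply (ple_trans HP Hg). rewrite <- reidx_comp by exact HP.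
  apply (ple_of_eq HP). f_equal. cateq.
Qed.

Lemma Pex_reidx_mono A A' (h : hom C A A') (x y : PexT P A') :
  Pex_le x y -> Pex_le (Pex_reidx h x) (Pex_reidx h y).
Proof.
  destruct x as [B a], y as [D b]. cbn.
  intros [f Hf]. exists (comp f (fprod h (idm B))). cbn.
  apply (reidx_mono HP (fprod h (idm B))) in Hf. apply (ple_trans HP Hf).
  rewrite <- !reidx_comp by exact HP.
  apply (ple_of_eq HP). f_equal. cateq.
Qed.

Lemma Pex_is_doctrine : is_doctrine (Pex P).
Proof.
  split; [exact Pex_le_refl|]. split; [exact Pex_le_trans|].
  split; [exact Pex_reidx_mono|]. split.
  - intros A [B a]. cbn. unfold Pex_reidx. cbn.
    rewrite fprod_idm, reidx_id by exact HP. reflexivity.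
  - intros A B D f g [X a]. cbn. unfold Pex_reidx. cbn.
    rewrite <- reidx_comp by exact HP. do 2 f_equal. cateq.
Qed.

Lemma Pex_peq_of_peq A B (a b : fib P (prod A B)) :
  peq a b -> peq (P := Pex P) (existT _ B a : PexT P A) (existT _ B b).
Proof. intros [H1 H2]. split; apply Pex_le_of_ple; assumption. Qed.

Definition Pex_ex1 (A B : ob C) (x : PexT P (prod A B)) : PexT P A :=
  existT _ (prod B (projT1 x)) (reidx (assocl A B (projT1 x)) (projT2 x)).

Lemma Pex_ex1_le_iff A B D F (a : fib P (prod (prod A B) D)) (c : fib P (prod A F))
    (g : hom C (prod (prod A B) D) F) :
  ple (reidx (assocl A B D) a) (reidx (pair (pr1 A _) (comp g (assocl A B D))) c)
  <-> ple a (reidx (pair (pr1 _ D) g) (reidx (fprod (pr1 A B) (idm F)) c)).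
Proof.
  rewrite <- (reidx_le_reidx_iff HP (assocl_assocr A B D)), <- !reidx_comp by exact HP.
  replace (comp (fprod (pr1 A B) (idm F)) (comp (pair (pr1 _ D) g) (assocl A B D)))
    with (pair (pr1 A _) (comp g (assocl A B D))) by (unfold assocl; cateq).
  reflexivity.
Qed.

Lemma Pex_existential : existential (Pex P).
Proof.
  apply (existential_of_pr1 Pex_is_doctrine Pex_ex1).
  - intros A B [D a] [F c]. cbn. split.
    + intros [f Hf]. exists (comp f (assocr A B D)). apply Pex_ex1_le_iff. cbn.
      rewrite <- comp_assoc, assocr_assocl, comp_idr. exact Hf.
    + intros [g Hg]. exists (comp g (assocl A B D)). apply Pex_ex1_le_iff, Hg.
  - intros A A' B f [D a]. cbn. unfold Pex_ex1, Pex_reidx. cbn.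
    rewrite <- !reidx_comp, assocl_fprod by exact HP.
    apply Pex_peq_of_peq. split; apply ple_refl, HP.
Qed.

Section Universal.
Context {E : ob C -> ob C -> ob C} {ev : forall B D, hom C (prod (E B D) B) D}.
Hypothesis ev_onto :
  forall B D X (g : hom C (prod X B) D), exists h, comp (ev B D) (fprod h (idm B)) = g.
Context {all1 : forall A B, fib P (prod A B) -> fib P A}.
Hypothesis all1_adj : forall A B (a : fib P (prod A B)) (b : fib P A),
  ple b (all1 A B a) <-> ple (reidx (pr1 A B) b) a.
Hypothesis all1_bc : forall A A' B (f : hom C A' A) (a : fib P (prod A B)),
  peq (all1 A' B (reidx (fprod f (idm B)) a)) (reidx f (all1 A B a)).

Lemma le_reidx_all1 X Y B (k : hom C X Y) (a : fib P (prod Y B)) (c : fib P X) :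
  ple c (reidx k (all1 Y B a)) <-> ple (reidx (pr1 X B) c) (reidx (fprod k (idm B)) a).
Proof.
  destruct (all1_bc Y X B k a) as [bc1 bc2].
  rewrite <- all1_adj. split; intros H; eapply (ple_trans HP); eassumption.
Qed.

(** [((a, h), b) |-> ((a, b), ev (h, b))] *)
Definition skolem (A B D : ob C) : hom C (prod (prod A (E B D)) B) (prod (prod A B) D) :=
  pair (fprod (pr1 A (E B D)) (idm B)) (comp (ev B D) (fprod (pr2 A (E B D)) (idm B))).

(** [((a, b), y) |-> ev (h (a, y), b)] *)
Definition uncurry {A B D F : ob C} (h : hom C (prod A F) (E B D)) :
  hom C (prod (prod A B) F) D :=
  comp (ev B D) (pair (comp h (fprod (pr1 A B) (idm F))) (comp (pr2 A B) (pr1 _ F))).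

Lemma skolem_fprod (A A' B D : ob C) (f : hom C A' A) :
  comp (skolem A B D) (fprod (fprod f (idm (E B D))) (idm B))
  = comp (fprod (fprod f (idm B)) (idm D)) (skolem A' B D).
Proof. unfold skolem; cateq. Qed.

Lemma skolem_swap_mid (A B D F : ob C) (h : hom C (prod A F) (E B D)) :
  comp (skolem A B D) (comp (fprod (pair (pr1 A F) h) (idm B)) (swap_mid A B F))
  = pair (pr1 _ F) (uncurry h).
Proof. unfold skolem, uncurry, swap_mid; cateq. Qed.

Lemma uncurry_onto {A B D F : ob C} (f : hom C (prod (prod A B) F) D) :
  exists h, uncurry h = f.
Proof.
  destruct (ev_onto _ _ _ (comp f (swap_mid A F B))) as [h Hh].
  exists h.
  transitivity (comp (comp (ev B D) (fprod h (idm B))) (swap_mid A B F)).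
  - unfold uncurry, swap_mid; cateq.
  - rewrite Hh, <- comp_assoc, swap_mid_swap_mid, comp_idr. reflexivity.
Qed.

Definition Pex_all1 (A B : ob C) (x : PexT P (prod A B)) : PexT P A :=
  existT _ (E B (projT1 x)) (all1 _ B (reidx (skolem A B (projT1 x)) (projT2 x))).

Lemma Pex_all1_le_iff A B D F (a : fib P (prod (prod A B) D)) (c : fib P (prod A F))
    (h : hom C (prod A F) (E B D)) :
  ple c (reidx (pair (pr1 A F) h) (all1 _ B (reidx (skolem A B D) a)))
  <-> ple (reidx (fprod (pr1 A B) (idm F)) c) (reidx (pair (pr1 _ F) (uncurry h)) a).
Proof.
  rewrite le_reidx_all1.
  rewrite <- (reidx_le_reidx_iff HP (swap_mid_swap_mid A F B)).
  rewrite <- !reidx_comp, pr1_swap_mid, skolem_swap_mid by exact HP.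
  reflexivity.
Qed.

Lemma Pex_universal : universal (Pex P).
Proof.
  apply (universal_of_pr1 Pex_is_doctrine (all1 := Pex_all1)).
  - intros A B [D a] [F c]. cbn. unfold Pex_all1, Pex_reidx. cbn. split.
    + intros [h Hh]. exists (uncurry h). apply Pex_all1_le_iff, Hh.
    + intros [f Hf]. destruct (uncurry_onto f) as [h <-].
      exists h. apply Pex_all1_le_iff, Hf.
  - intros A A' B f [D a]. cbn. unfold Pex_all1, Pex_reidx. cbn.
    rewrite <- reidx_comp, <- skolem_fprod, reidx_comp by exact HP.
    apply Pex_peq_of_peq, all1_bc.
Qed.

End Universal.
End ExistentialCompletion.

Theorem theorem6 (C : CatFP) (P : Doctrine C) :
  is_pos_doctrine P -> universal P -> has_exponents C ->
  is_doctrine (Pex P) /\ existential (Pex P) /\ universal (Pex P).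
Proof.
  intros [HP _] (all1 & _ & all1_adj & _ & all1_bc & _) Hexp.
  destruct (weak_exponents_choice Hexp) as (E & ev & ev_onto).
  split; [|split].
  - exact (Pex_is_doctrine HP).
  - exact (Pex_existential HP).
  - exact (Pex_universal HP ev_onto all1_adj all1_bc).
Qed.
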